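(* For every integer $n \geq 1$, the number $R(n)$ of Riordan paths of length $n$ satisfies $$R(n) = \sum_{k=1}^{\lfloor n/2 \rfloor} f^{(k,k,1^{n-2k})}.$$
   Context: A Motzkin path of length $n$ is a lattice path from $(0,0)$ to $(n,0)$ using steps $U=(1,1)$, $F=(1,0)$, $D=(1,-1)$ that never goes below the $x$-axis. A Riordan path is a Motzkin path with no flat step $F$ on the $x$-axis. $R(n)$ is the number of Riordan paths of length $n$ (the Riordan numbers). $f^\mu$ denotes the number of standard Young tableaux of shape $\mu$, and $(k,k,1^{j})$ is the partition with two parts equal to $k$ followed by $j$ parts equal to $1$. *)

From HB Require Import structures.
From mathcomp Require Import all_boot all_order all_algebra.
Set Implicit Arguments. Unset Strict Implicit. Unset Printing Implicit Defensive.
Import GRing.Theory Num.Theory.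

Inductive step := U | F | D.

Definition step_code (s : step) : 'I_3 :=
  match s with U => inord 0 | F => inord 1 | D => inord 2 end.
Definition step_decode (i : 'I_3) : step :=
  match val i with 0 => U | 1 => F | _ => D end.
Lemma step_codeK : cancel step_code step_decode.
Proof. by case; rewrite /step_decode /= inordK. Qed.
HB.instance Definition _ := Finite.copy step (can_type step_codeK).

Definition dy (s : step) : int :=
  match s with U => 1 | F => 0 | D => -1 end.

Definition height (p : seq step) : int := \sum_(s <- p) dy s.

Definition motzkin (p : seq step) : bool :=
  [forall i : 'I_(size p).+1, (0 <= height (take i p))%R] && (height p == 0).

Definition riordan (p : seq step) : bool :=
  motzkin p &&
  [forall i : 'I_(size p), (nth U p i == F) ==> (height (take i p) != 0)].

Definition riordan_number (n : nat) : nat :=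
  #|[set t : n.-tuple step | riordan t]|.

(* A partition is given as a weakly decreasing seq of positive parts;
   its Young diagram has cells (i,j) with i < size la and j < la_i. *)
Definition in_diagram (la : seq nat) (i j : nat) : bool :=
  (i < size la) && (j < nth 0 la i).

(* A standard Young tableau of shape la (with N = sumn la cells) is encoded as
   a function on the bounding box 'I_(size la) * 'I_(la_0) with values in
   'I_N.+1: it is 0 outside the diagram, takes values in {1..N} injectively on
   the diagram (hence bijectively, the diagram having N cells), and is
   strictly increasing along rows and down columns. *)
Definition is_syt (la : seq nat)
  (T : {ffun 'I_(size la) * 'I_(nth 0 la 0) -> 'I_(sumn la).+1}) : bool :=
  [forall c : 'I_(size la) * 'I_(nth 0 la 0),
     if in_diagram la c.1 c.2 then 0 < T c else val (T c) == 0] &&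
  [forall c1 : 'I_(size la) * 'I_(nth 0 la 0), forall c2 : 'I_(size la) * 'I_(nth 0 la 0),
     (in_diagram la c1.1 c1.2 && in_diagram la c2.1 c2.2 && (T c1 == T c2))
       ==> (c1 == c2)] &&
  [forall c1 : 'I_(size la) * 'I_(nth 0 la 0), forall c2 : 'I_(size la) * 'I_(nth 0 la 0),
     (in_diagram la c1.1 c1.2 && in_diagram la c2.1 c2.2 &&
      (((val c1.1 == val c2.1) && (val c1.2 < val c2.2)) ||
       ((val c1.2 == val c2.2) && (val c1.1 < val c2.1))))
       ==> (val (T c1) < val (T c2))].

Definition num_syt (la : seq nat) : nat := #|[set T | @is_syt la T]|.

Definition kk1 (k j : nat) : seq nat := [:: k, k & nseq j 1].

From mathcomp Require Import all_boot all_algebra zify.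
Set Implicit Arguments. Unset Strict Implicit. Unset Printing Implicit Defensive.

Import GRing.Theory.

(* Write a standard tableau of shape (k, k, 1^j) as the word whose m-th letter
   is U, D or F according as m + 1 lies in the first row, the second row or the
   column below them.  The tableau conditions say exactly that this word is a
   Motzkin path (the t-th D comes after the t-th U) whose first flat step comes
   after its first down step, and such a word determines the tableau.  So the
   right-hand side counts these paths of length n, sorted by their number k of
   up steps (k = 0 and 2k > n being impossible for n >= 1).  Counting paths by
   their first step gives recurrences, and since the Motzkin paths from height
   h are equinumerous with the Riordan paths from heights h and h + 1 together,
   these paths satisfy the recurrence of Riordan paths. *)

Definition isU (x : step) := if x is U then true else false.
Definition isD (x : step) := if x is D then true else false.
Definition isF (x : step) := if x is F then true else false.

Lemma count_UDF w : count isU w + count isD w + count isF w = size w.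
Proof. by elim: w => [|[] w IHw] //=; lia. Qed.

Lemma sorted_mkseq (f : nat -> nat) K :
  {in gtn K &, {homo f : t1 t2 / t1 < t2}} -> sorted ltn (mkseq f K).
Proof.
move=> f_mono; apply: (homo_sorted_in (P := gtn K)) f_mono _ (iota_ltn_sorted 0 K).
by apply/allP => i; rewrite mem_iota.
Qed.

Section Occurrences.

Variables (T : Type) (x0 : T) (P : pred T).

(* [occ c w] is the index in [w] of its [c]-th letter satisfying [P], counting
   from 0; it is [size w] when there are at most [c] such letters. *)
Fixpoint occ (c : nat) (w : seq T) : nat :=
  if w is x :: w' then
    if P x then (if c is c'.+1 then (occ c' w').+1 else 0) else (occ c w').+1
  else 0.

Lemma ltn_count_take i c w :
  (c < count P (take i w)) = (c < count P w) && (occ c w < i).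
Proof.
elim: w i c => [|x w IHw] [|i] c //=; rewrite ?andbF //.
case: (P x) => /=; last by rewrite !add0n IHw ltnS.
by case: c => [|c]; rewrite ?add1n ?ltnS // IHw.
Qed.

Lemma occ_size c w : c < count P w -> occ c w < size w.
Proof. by move=> lt_c; have := ltn_count_take (size w) c w; rewrite take_size lt_c. Qed.

Lemma occ_pred c w : c < count P w -> P (nth x0 w (occ c w)).
Proof.
elim: w c => [|x w IHw] c //=.
case Px: (P x) => /=; last by rewrite add0n; apply: IHw.
by case: c => [|c] //=; rewrite add1n ltnS; apply: IHw.
Qed.

Lemma count_take_occ c w : c < count P w -> count P (take (occ c w) w) = c.
Proof.
elim: w c => [|x w IHw] c //=.
case Px: (P x) => /=; last by rewrite /= Px !add0n; apply: IHw.
by case: c => [|c] //=; rewrite /= Px !add1n ltnS => lt_c; rewrite IHw.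
Qed.

Lemma occ_lt c c' w : c < c' -> c' < count P w -> occ c w < occ c' w.
Proof.
move=> lt_cc' lt_c'; have := ltn_count_take (occ c' w) c w.
by rewrite count_take_occ // lt_cc' => /esym /andP [].
Qed.

Lemma occ_le c c' w : c <= c' -> c' < count P w -> occ c w <= occ c' w.
Proof.
by rewrite leq_eqVlt => /predU1P [-> //|lt_cc' lt_c']; exact/ltnW/occ_lt.
Qed.

Lemma occ_inj c c' w : c < count P w -> c' < count P w ->
  occ c w = occ c' w -> c = c'.
Proof.
move=> lt_c lt_c' eq_occ; case: (ltngtP c c') => // lt.
  by have := occ_lt lt lt_c'; rewrite eq_occ ltnn.
by have := occ_lt lt lt_c; rewrite eq_occ ltnn.
Qed.

Lemma occ_count_take m w : m < size w -> P (nth x0 w m) ->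
  count P (take m w) < count P w /\ occ (count P (take m w)) w = m.
Proof.
elim: w m => [|x w IHw] [|m] //=; first by move=> _ ->; rewrite add1n.
rewrite ltnS => lt_m Pm; have [lt_cnt occ_m] := IHw m lt_m Pm.
by case: (P x) => /=; rewrite ?add1n ?add0n ?ltnS occ_m.
Qed.

Lemma occ_enum w K (phi : nat -> nat) :
  (forall t, t < K -> phi t < size w /\ P (nth x0 w (phi t))) ->
  (forall m, m < size w -> P (nth x0 w m) -> exists2 t, t < K & phi t = m) ->
  (forall t1 t2, t1 < t2 -> t2 < K -> phi t1 < phi t2) ->
  count P w = K /\ (forall t, t < K -> occ t w = phi t).
Proof.
move=> phi_occ occ_phi phi_mono.
have sorted_phi : sorted ltn (mkseq phi K).
  by apply: sorted_mkseq => t1 t2 _ lt_t2 lt_t12; exact: phi_mono.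
have sorted_occ : sorted ltn (mkseq (occ^~ w) (count P w)).
  by apply: sorted_mkseq => t1 t2 _ lt_t2 lt_t12; exact: occ_lt.
have same_mem : mkseq phi K =i mkseq (occ^~ w) (count P w).
  move=> m; apply/mapP/mapP => [[t]|[c]]; rewrite mem_iota add0n => lt_t ->.
    have [lt_phi Pphi] := phi_occ t lt_t; have [lt_cnt <-] := occ_count_take lt_phi Pphi.
    by exists (count P (take (phi t) w)); rewrite ?mem_iota.
  have [t lt_tK <-] := occ_phi _ (occ_size lt_t) (occ_pred lt_t).
  by exists t; rewrite ?mem_iota.
have eq_seq := irr_sorted_eq ltn_trans ltnn sorted_phi sorted_occ same_mem.
have cntK : count P w = K by have := congr1 size eq_seq; rewrite !size_mkseq.
split=> // t lt_t.
by have := congr1 (nth 0 ^~ t) eq_seq; rewrite /= !nth_mkseq ?cntK.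
Qed.

End Occurrences.

Lemma occ_disjoint (P Q : pred step) c c' w : (forall x, P x -> ~~ Q x) ->
  c < count P w -> c' < count Q w -> occ P c w <> occ Q c' w.
Proof.
move=> PnQ lt_c lt_c' eq_occ; have := PnQ _ (occ_pred U lt_c).
by rewrite eq_occ occ_pred.
Qed.

Definition same_occ (P : pred step) (w1 w2 : seq step) : Prop :=
  count P w1 = count P w2 /\ forall c, c < count P w1 -> occ P c w1 = occ P c w2.

Lemma same_occ_nth P w1 w2 m : same_occ P w1 w2 ->
  m < size w1 -> P (nth U w1 m) -> P (nth U w2 m).
Proof.
move=> [eq_cnt eq_occ] lt_m Pm; have [lt_cnt <-] := occ_count_take lt_m Pm.
by rewrite eq_occ // occ_pred // -eq_cnt.
Qed.

Lemma eq_from_occ w1 w2 : size w1 = size w2 ->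
  same_occ isU w1 w2 -> same_occ isD w1 w2 -> same_occ isF w1 w2 -> w1 = w2.
Proof.
move=> eq_size sameU sameD sameF; apply: (eq_from_nth (x0 := U)) => // m lt_m.
case E: (nth U w1 m).
- by have := same_occ_nth sameU lt_m; rewrite E => /(_ isT); case: nth.
- by have := same_occ_nth sameF lt_m; rewrite E => /(_ isT); case: nth.
- by have := same_occ_nth sameD lt_m; rewrite E => /(_ isT); case: nth.
Qed.

Fixpoint motzkin_from (h : nat) (p : seq step) : bool :=
  if p is x :: q then
    match x with
    | U => motzkin_from h.+1 q
    | F => motzkin_from h q
    | D => (h != 0) && motzkin_from h.-1 q
    end
  else h == 0.

Fixpoint riordan_from (h : nat) (p : seq step) : bool :=
  if p is x :: q then
    match x with
    | U => riordan_from h.+1 q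
    | F => (h != 0) && riordan_from h q
    | D => (h != 0) && riordan_from h.-1 q
    end
  else h == 0.

Fixpoint lattice_from (a : nat) (p : seq step) : bool :=
  if p is x :: q then
    match x with
    | U => lattice_from a.+1 q
    | F => false
    | D => (a != 0) && motzkin_from a.-1 q
    end
  else a == 0.

Lemma all_iotaS (f : nat -> bool) m :
  all f (iota 0 m.+1) = f 0 && all (fun i => f i.+1) (iota 0 m).
Proof. by rewrite /= -[1]addn0 iotaDl all_map. Qed.


Definition ballot (h : nat) (p : seq step) : bool :=
  all (fun i => count isD (take i p) <= h + count isU (take i p)) (iota 0 (size p).+1).

Definition flat_after_down (p : seq step) : bool :=
  all (fun i => isF (nth U p i) ==> (0 < count isD (take i p))) (iota 0 (size p)).

Lemma ballot_cons h x p : ballot h (x :: p) =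
  match x with
  | U => ballot h.+1 p
  | F => ballot h p
  | D => (h != 0) && ballot h.-1 p
  end.
Proof.
rewrite /ballot all_iotaS take0 leq0n andTb.
case: x; [| |case: h => [|h]].
- by apply: eq_all => i; rewrite /= add1n addnS addSn.
- by apply: eq_all => i; rewrite /= add0n.
- by rewrite [size _]/= all_iotaS /= take0.
- by apply: eq_all => i; rewrite /= add1n addSn.
Qed.

Lemma motzkin_fromE h p :
  motzkin_from h p = ballot h p && (h + count isU p == count isD p).
Proof.
elim: p h => [|x p IHp] h; first by rewrite /ballot /iota /= addn0.
rewrite ballot_cons; case: x => /=; rewrite IHp ?add1n ?add0n ?addnS //.
by case: h => [|h]; rewrite //= addSn eqSS.
Qed.

Lemma lattice_fromE a p :
  lattice_from a p = motzkin_from a p && flat_after_down p.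
Proof.
elim: p a => [|x p IHp] a; first by rewrite andbT.
rewrite /flat_after_down all_iotaS /=; case: x => /=.
- by rewrite IHp.
- by rewrite andbF.
rewrite [all _ _](_ : _ = true) ?andbT //.
by apply/allP => i _; rewrite add1n implybT.
Qed.

Lemma height_nil : height [::] = 0%R.
Proof. by rewrite /height big_nil. Qed.

Lemma height_cons x p : height (x :: p) = (dy x + height p)%R.
Proof. by rewrite /height big_cons. Qed.

Lemma riordan_fromE h p : riordan_from h p =
  [&& all (fun i => (0 <= h%:Z + height (take i p))%R) (iota 0 (size p).+1),
      (h%:Z + height p == 0)%R &
      all (fun i => isF (nth U p i) ==> (h%:Z + height (take i p) != 0)%R)
        (iota 0 (size p))].
Proof.
elim: p h => [|x p IHp] h.
  by rewrite /iota /= height_nil addr0 andbT; apply/idP/idP => [/eqP->//|]; lia.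
rewrite [size _]/= [in X in _ && X]all_iotaS all_iotaS take0 height_nil addr0.
rewrite le0z_nat andTb [isF (nth _ _ 0)]/=.
have shift y q : (h%:Z + height (y :: q) = (h%:Z + dy y) + height q)%R.
  by rewrite height_cons addrA.
under eq_all => i do rewrite take_cons shift.
under [in X in _ && X]eq_all => i do rewrite [nth _ _ _]/= take_cons shift.
rewrite shift {shift}; case: x; rewrite [riordan_from _ _]/= [dy _]/= [isF _]/=.
- by rewrite implyFb andTb -PoszD addn1 IHp.
- case: h => [|h]; first by rewrite /= !andbF.
  by rewrite addr0 IHp.
- case: h => [|h]; first by rewrite all_iotaS take0 height_nil.
  by rewrite implyFb andTb (_ : h.+1%:Z + -1 = h%:Z)%R ?IHp //; lia.
Qed.

Lemma forall_ordE m (f : nat -> bool) : [forall i : 'I_m, f i] = all f (iota 0 m).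
Proof.
apply/forallP/allP => [f_ord i|f_iota i]; last by apply: f_iota; rewrite mem_iota add0n ltn_ord.
by rewrite mem_iota add0n => lt_im; exact: (f_ord (Ordinal lt_im)).
Qed.

Lemma riordanE p : riordan p = riordan_from 0 p.
Proof.
rewrite riordan_fromE /riordan /motzkin add0r andbA.
rewrite (forall_ordE _ (fun i => 0 <= height (take i p))%R).
rewrite (forall_ordE _ (fun i => (nth U p i == F) ==> (height (take i p) != 0))%R).
have eqFE x : (x == F) = isF x by apply/eqP/idP; case: x.
by congr (_ && _ && _); apply: eq_all => i; rewrite add0r ?eqFE.
Qed.

Definition lattice_word (w : seq step) : Prop :=
  [/\ count isU w = count isD w,
      forall t, t < count isU w -> occ isU t w < occ isD t w &
      0 < count isF w -> 0 < count isD w /\ occ isD 0 w < occ isF 0 w].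

Lemma lattice_word_from0 w : lattice_from 0 w -> lattice_word w.
Proof.
rewrite lattice_fromE motzkin_fromE add0n.
case/andP=> /andP [/allP prefix_ok /eqP balanced] /allP flat_ok.
split=> // [t lt_tU|lt_0F].
  have lt_tD : t < count isD w by rewrite -balanced.
  have := prefix_ok (occ isD t w).+1; rewrite mem_iota add0n ltnS occ_size // => /(_ isT).
  have D_before : t < count isD (take (occ isD t w).+1 w).
    by rewrite ltn_count_take lt_tD ltnSn.
  move=> /(leq_trans D_before); rewrite add0n ltn_count_take lt_tU ltnS leq_eqVlt.
  case/predU1P => // eq_occ.
  by exfalso; apply: (occ_disjoint _ lt_tU lt_tD eq_occ); case.
have := flat_ok (occ isF 0 w); rewrite mem_iota add0n occ_size // occ_pred //=.
by rewrite ltn_count_take => /(_ isT) /andP.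
Qed.

Lemma lattice_from0_word w : lattice_word w -> lattice_from 0 w.
Proof.
case=> balanced U_before_D F_after_D.
rewrite lattice_fromE motzkin_fromE add0n balanced eqxx andbT.
apply/andP; split; apply/allP => i.
  move=> _; rewrite add0n; case E: (count isD (take i w)) => [//|d].
  have : d < count isD (take i w) by rewrite E.
  rewrite ltn_count_take => /andP [lt_dD lt_occ].
  have lt_dU : d < count isU w by rewrite balanced.
  by rewrite ltn_count_take lt_dU (ltn_trans (U_before_D d lt_dU) lt_occ).
rewrite mem_iota add0n => /andP [_ lt_i]; apply/implyP => Fi.
have [lt_cnt occ_i] := occ_count_take lt_i Fi.
have [lt_0D D_before_F] := F_after_D (leq_ltn_trans (leq0n _) lt_cnt).
rewrite ltn_count_take lt_0D -occ_i /=.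
exact: leq_trans D_before_F (occ_le (leq0n _) lt_cnt).
Qed.

Section TupleCount.

Variable T : finType.

Lemma card_tuple0_pred (P : pred (seq T)) : #|[set t : 0.-tuple T | P t]| = P [::].
Proof.
rewrite -sum1dep_card (eq_bigl (fun=> P [::])) => [|t]; last by rewrite tuple0.
case: (P [::]); last by rewrite big_pred0.
by rewrite sum1_card card_tuple.
Qed.

Lemma card_tupleS_pred n (P : pred (seq T)) :
  #|[set t : n.+1.-tuple T | P t]| = \sum_(x : T) #|[set t : n.-tuple T | P (x :: t)]|.
Proof.
rewrite -sum1dep_card (reindex (fun xt : T * n.-tuple T => [tuple of xt.1 :: xt.2])) /=.
  rewrite -(pair_big_dep xpredT (fun x (t : n.-tuple T) => P (x :: t)) (fun _ _ => 1)).
  by apply: eq_bigr => x _; rewrite sum1dep_card.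
exists (fun t : n.+1.-tuple T => (thead t, [tuple of behead t])) => [[x t] _|t _] /=.
  by congr pair; apply: val_inj.
by apply: val_inj; rewrite /= [t in RHS]tuple_eta.
Qed.

End TupleCount.

Lemma sum_step (G : step -> nat) : \sum_(x : step) G x = G U + G F + G D.
Proof.
rewrite (bigD1 U) // (bigD1 F); last by apply/eqP.
rewrite (bigD1 D); last by apply/andP; split; apply/eqP.
rewrite big_pred0 => [|x]; first by rewrite /= addn0 !addnA.
by case: x; rewrite eqxx ?andbF.
Qed.

Fixpoint nriordan n h :=
  if n is m.+1 then nriordan m h.+1 + (if h is h'.+1 then nriordan m h + nriordan m h' else 0)
  else (h == 0 : nat).

Fixpoint nmotzkin n h :=
  if n is m.+1 then nmotzkin m h.+1 + nmotzkin m h + (if h is h'.+1 then nmotzkin m h' else 0)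
  else (h == 0 : nat).

Fixpoint nlattice n a :=
  if n is m.+1 then nlattice m a.+1 + (if a is a'.+1 then nmotzkin m a' else 0)
  else (a == 0 : nat).

Lemma card_tupleS_step n (P : pred (seq step)) :
  #|[set t : n.+1.-tuple step | P t]| =
  #|[set t : n.-tuple step | P (U :: t)]| + #|[set t : n.-tuple step | P (F :: t)]|
  + #|[set t : n.-tuple step | P (D :: t)]|.
Proof. by rewrite card_tupleS_pred sum_step. Qed.

Lemma card_tuple_pred0 n : #|[set t : n.-tuple step | false]| = 0.
Proof. by apply/eqP; rewrite cards_eq0; apply/eqP/setP => t; rewrite inE. Qed.

Lemma card_riordan_from n h : #|[set t : n.-tuple step | riordan_from h t]| = nriordan n h.
Proof.
elim: n h => [|n IHn] h; first by rewrite card_tuple0_pred.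
rewrite card_tupleS_step /= IHn.
by case: h => [|h] /=; rewrite ?card_tuple_pred0 ?IHn //; lia.
Qed.

Lemma card_motzkin_from n h : #|[set t : n.-tuple step | motzkin_from h t]| = nmotzkin n h.
Proof.
elim: n h => [|n IHn] h; first by rewrite card_tuple0_pred.
rewrite card_tupleS_step /= !IHn.
by case: h => [|h] /=; rewrite ?card_tuple_pred0 ?IHn //; lia.
Qed.

Lemma card_lattice_from n a : #|[set t : n.-tuple step | lattice_from a t]| = nlattice n a.
Proof.
elim: n a => [|n IHn] a; first by rewrite card_tuple0_pred.
rewrite card_tupleS_step /= IHn card_tuple_pred0 addn0.
by case: a => [|a] /=; rewrite ?card_tuple_pred0 ?card_motzkin_from.
Qed.

Lemma nmotzkinE n h : nmotzkin n h = nriordan n h + nriordan n h.+1.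
Proof.
elim: n h => [|n IHn] h; first by case: h.
by rewrite /= !IHn; case: h => [|h] /=; rewrite ?IHn; lia.
Qed.

Lemma nlatticeE n a : nlattice n a = nriordan n a.
Proof.
elim: n a => [|n IHn] a //=.
by case: a => [|a]; rewrite IHn ?nmotzkinE /=; lia.
Qed.

Notation cell la := ('I_(size la) * 'I_(nth 0 la 0))%type.

Section StandardTableaux.

Variables (la : seq nat) (T : {ffun cell la -> 'I_(sumn la).+1}).
Hypothesis T_syt : is_syt T.

Lemma syt_gt0 (c : cell la) : in_diagram la c.1 c.2 -> 0 < T c.
Proof. by case/andP: T_syt => /andP [/forallP /(_ c) + _] _ c_in; rewrite c_in. Qed.

Lemma syt_out (c : cell la) : ~~ in_diagram la c.1 c.2 -> val (T c) = 0.
Proof.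
by case/andP: T_syt => /andP [/forallP /(_ c) + _] _ /negbTE c_out; rewrite c_out => /eqP.
Qed.

Lemma syt_inj (c1 c2 : cell la) : in_diagram la c1.1 c1.2 -> in_diagram la c2.1 c2.2 ->
  T c1 = T c2 -> c1 = c2.
Proof.
case/andP: T_syt => /andP [_ /forallP /(_ c1) /forallP /(_ c2) T_inj] _ c1_in c2_in eqT.
by apply/eqP; move: T_inj; rewrite c1_in c2_in eqT eqxx.
Qed.

Lemma syt_lt (c1 c2 : cell la) : in_diagram la c1.1 c1.2 -> in_diagram la c2.1 c2.2 ->
  ((val c1.1 == val c2.1) && (val c1.2 < val c2.2)) ||
  ((val c1.2 == val c2.2) && (val c1.1 < val c2.1)) -> val (T c1) < val (T c2).
Proof.
case/andP: T_syt => _ /forallP /(_ c1) /forallP /(_ c2) T_mono c1_in c2_in c12.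
by move: T_mono; rewrite c1_in c2_in c12.
Qed.

Lemma syt_entry_lt (c : cell la) : in_diagram la c.1 c.2 -> (val (T c)).-1 < sumn la.
Proof. by move=> c_in; rewrite -ltnS prednK ?ltn_ord ?syt_gt0. Qed.

End StandardTableaux.

Lemma sumn_kk1 k j : sumn (kk1 k j) = k + (k + j).
Proof. by rewrite /= sumn_nseq mul1n. Qed.

Section TableauxKK1.

Variables k j : nat.
Local Notation la := (kk1 k.+1 j).

Lemma in_diagram_kk1 i t :
  in_diagram la i t = ((i < 2) && (t < k.+1)) || [&& 1 < i, i < j.+2 & t == 0].
Proof.
rewrite /in_diagram /=; case: i => [|[|i]] /=; rewrite ?orbF //.
by rewrite size_nseq nth_nseq !ltnS; case: (i < j); case: t.
Qed.

Lemma in_diagram_kk1_bounds i t : in_diagram la i t -> i < j.+2 /\ t < k.+1.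
Proof. by rewrite in_diagram_kk1; lia. Qed.

Lemma card_diagram_kk1 : #|[set c : cell la | in_diagram la c.1 c.2]| = sumn la.
Proof.
rewrite -sum1dep_card big_mkcond /=.
rewrite -(pair_bigA _ (fun (i : 'I_(size la)) (t : 'I_(nth 0 la 0)) =>
  if in_diagram la i t then 1 else 0)) /=.
rewrite (eq_bigr (fun i : 'I_(size la) => if val i < 2 then k.+1 else 1)) => [|i _].
  rewrite !big_ord_recl /= sumn_nseq mul1n -[j in RHS](size_nseq j 1).
  by rewrite sum1_card card_ord.
have lt_i : val i < j.+2 by rewrite (leq_trans (ltn_ord i)) //= size_nseq.
case: ifP => [row_i|/negbT]; last rewrite -leqNgt => gt_i.
  rewrite (eq_bigr (fun=> 1)) => [|t _]; last by rewrite in_diagram_kk1 row_i ltn_ord.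
  by rewrite sum1_card card_ord.
rewrite big_ord_recl in_diagram_kk1 gt_i lt_i ltnNge gt_i /= big1 // => t _.
by rewrite in_diagram_kk1 ltnNge gt_i lt_i /bump.
Qed.

Definition cell_at (i t : nat) : cell la := (inord i, inord t).

Lemma cell_at_row i t : i < j.+2 -> val (cell_at i t).1 = i.
Proof. by move=> lt_i; rewrite /= inordK //= size_nseq. Qed.

Lemma cell_at_col i t : t < k.+1 -> val (cell_at i t).2 = t.
Proof. exact: inordK. Qed.

Lemma cell_atE (c : cell la) : c = cell_at c.1 c.2.
Proof. by case: c => i t; congr pair; apply/val_inj; rewrite /= inordK. Qed.

Definition row_letter (i : nat) : step := match i with 0 => U | 1 => D | _ => F end.

Definition cell_occ (w : seq step) (i t : nat) : nat :=
  match i with 0 => occ isU t w | 1 => occ isD t w | i'.+2 => occ isF i' w end.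

Definition tableau_of_word (w : seq step) : {ffun cell la -> 'I_(sumn la).+1} :=
  [ffun c : cell la => if in_diagram la c.1 c.2 then inord (cell_occ w c.1 c.2).+1 else ord0].

Section TableauToWord.

Variable T : {ffun cell la -> 'I_(sumn la).+1}.
Hypothesis T_syt : is_syt T.

Lemma syt_kk1_onto m : m < sumn la ->
  exists2 c : cell la, in_diagram la c.1 c.2 & val (T c) = m.+1.
Proof.
pose Dg := [set c : cell la | in_diagram la c.1 c.2].
have T_inj : {in Dg &, injective T} by move=> c1 c2; rewrite !inE; apply: syt_inj.
have T_Dg : T @: Dg = [set~ ord0].
  apply/eqP; rewrite eqEcard cardsC1 card_ord card_in_imset // card_diagram_kk1 leqnn.
  rewrite andbT; apply/subsetP => _ /imsetP [c c_in ->]; rewrite !inE -val_eqE -lt0n.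
  by rewrite inE in c_in; exact: syt_gt0.
move=> lt_m; have : inord m.+1 \in T @: Dg by rewrite T_Dg !inE -val_eqE /= inordK.
by case/imsetP => c; rewrite inE => c_in eq_c; exists c; rewrite // -eq_c /= inordK.
Qed.

Definition row_of_entry (m : nat) : nat :=
  if [pick c | val (T c) == m.+1] is Some c then val c.1 else 0.

Definition word_of_tableau : seq step :=
  mkseq (fun m => row_letter (row_of_entry m)) (sumn la).

Lemma nth_word_of_tableau (c : cell la) : in_diagram la c.1 c.2 ->
  nth U word_of_tableau (val (T c)).-1 = row_letter (val c.1).
Proof.
move=> c_in; rewrite nth_mkseq ?syt_entry_lt // /row_of_entry.
have T_gt0 := syt_gt0 T_syt c_in.
case: pickP => [c' /eqP|/(_ c)]; rewrite prednK ?eqxx // => eq_c'.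
have c'_in : in_diagram la c'.1 c'.2.
  by apply: contraTT T_gt0 => /(syt_out T_syt); rewrite -eq_c' => ->.
by rewrite (syt_inj T_syt c'_in c_in (val_inj eq_c')).
Qed.

Lemma occ_word_of_tableau (P : pred step) K (cf : nat -> cell la) :
  (forall t, t < K -> in_diagram la (cf t).1 (cf t).2 /\ P (row_letter (cf t).1)) ->
  (forall c : cell la, in_diagram la c.1 c.2 -> P (row_letter c.1) ->
     exists2 t, t < K & cf t = c) ->
  (forall t1 t2, t1 < t2 -> t2 < K -> val (T (cf t1)) < val (T (cf t2))) ->
  count P word_of_tableau = K /\
  forall t, t < K -> occ P t word_of_tableau = (val (T (cf t))).-1.
Proof.
move=> cf_in cf_onto cf_mono; apply: (occ_enum (x0 := U)).
- move=> t lt_t; have [cf_t P_t] := cf_in t lt_t.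
  by rewrite size_mkseq nth_word_of_tableau ?syt_entry_lt.
- move=> m; rewrite size_mkseq => /syt_kk1_onto [c c_in eq_m].
  rewrite -[m]/(m.+1.-1) -eq_m nth_word_of_tableau // => P_c.
  by have [t lt_t <-] := cf_onto c c_in P_c; exists t.
- move=> t1 t2 lt_t12 lt_t2; have lt_T := cf_mono t1 t2 lt_t12 lt_t2.
  have [cf_t1 _] := cf_in t1 (ltn_trans lt_t12 lt_t2).
  by rewrite -ltnS prednK ?(syt_gt0 T_syt) // (ltn_predK lt_T).
Qed.

Lemma occ_word_of_tableau_row r (P : pred step) :
  r < 2 -> (forall i, P (row_letter i) = (i == r)) ->
  count P word_of_tableau = k.+1 /\
  forall t, t < k.+1 -> occ P t word_of_tableau = (val (T (cell_at r t))).-1.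
Proof.
move=> lt_r P_row; have lt_r2 : r < j.+2 by apply: leq_trans lt_r _.
apply: occ_word_of_tableau => [t lt_t|c|t1 t2 lt_t12 lt_t2].
- by rewrite in_diagram_kk1 P_row cell_at_row // cell_at_col // lt_r lt_t eqxx; split.
- rewrite P_row => _ /eqP row_c.
  by exists (val c.2); rewrite ?ltn_ord // -row_c -cell_atE.
- have lt_t1 := ltn_trans lt_t12 lt_t2.
  apply: (syt_lt T_syt); rewrite ?in_diagram_kk1 ?cell_at_row ?cell_at_col //;
    by rewrite ?lt_r ?lt_t1 ?lt_t2 ?eqxx ?lt_t12 ?orbT.
Qed.

Lemma occ_word_of_tableau_col :
  count isF word_of_tableau = j /\
  forall t, t < j -> occ isF t word_of_tableau = (val (T (cell_at t.+2 0))).-1.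
Proof.
apply: occ_word_of_tableau => [t lt_t|c|t1 t2 lt_t12 lt_t2].
- by rewrite in_diagram_kk1 cell_at_row ?cell_at_col ?ltnS // lt_t eqxx orbT.
- rewrite in_diagram_kk1; case E: (val c.1) => [|[|i]] //= /andP [lt_i /eqP col_c] _.
  by exists i; rewrite // (cell_atE c) E col_c.
- have lt_t1 := ltn_trans lt_t12 lt_t2.
  apply: (syt_lt T_syt); rewrite ?in_diagram_kk1 ?cell_at_row ?cell_at_col ?ltnS //;
    by rewrite ?lt_t1 ?lt_t2 ?eqxx ?lt_t12 ?orbT.
Qed.

Lemma occ_word_of_tableau_U :
  count isU word_of_tableau = k.+1 /\
  forall t, t < k.+1 -> occ isU t word_of_tableau = (val (T (cell_at 0 t))).-1.
Proof. by apply: occ_word_of_tableau_row => // -[|[]]. Qed.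

Lemma occ_word_of_tableau_D :
  count isD word_of_tableau = k.+1 /\
  forall t, t < k.+1 -> occ isD t word_of_tableau = (val (T (cell_at 1 t))).-1.
Proof. by apply: occ_word_of_tableau_row => // -[|[]]. Qed.

Lemma syt_cell_at_lt i t i' t' : in_diagram la i t -> in_diagram la i' t' ->
  ((i == i') && (t < t')) || ((t == t') && (i < i')) ->
  (val (T (cell_at i t))).-1 < (val (T (cell_at i' t'))).-1.
Proof.
move=> in_it in_it' lt_cells.
have [lt_i lt_t] := in_diagram_kk1_bounds in_it.
have [lt_i' lt_t'] := in_diagram_kk1_bounds in_it'.
rewrite -ltnS !prednK ?(syt_gt0 T_syt) ?cell_at_row ?cell_at_col //.
by apply: syt_lt; rewrite ?cell_at_row ?cell_at_col.
Qed.

Lemma lattice_word_of_tableau : lattice_word word_of_tableau.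
Proof.
have [cntU occU] := occ_word_of_tableau_U; have [cntD occD] := occ_word_of_tableau_D.
have [cntF occF] := occ_word_of_tableau_col.
split=> [|t|]; first by rewrite cntU cntD.
  rewrite cntU => lt_t; rewrite occU // occD // syt_cell_at_lt //;
    by rewrite ?in_diagram_kk1 ?lt_t ?eqxx ?orbT.
rewrite cntF cntD => lt_0j; split=> //.
by rewrite occD // occF // syt_cell_at_lt ?in_diagram_kk1 //= !ltnS lt_0j.
Qed.

Lemma cell_occ_word_of_tableau i t : in_diagram la i t ->
  cell_occ word_of_tableau i t = (val (T (cell_at i t))).-1.
Proof.
have [_ occU] := occ_word_of_tableau_U; have [_ occD] := occ_word_of_tableau_D.
have [_ occF] := occ_word_of_tableau_col.
rewrite in_diagram_kk1; case: i => [|[|i]] in_it; [apply: occU | apply: occD |]; try lia.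
by move: in_it; rewrite /= !ltnS => /andP [lt_ij /eqP ->]; apply: occF.
Qed.

Lemma word_of_tableauK : tableau_of_word word_of_tableau = T.
Proof.
apply/ffunP => c; rewrite ffunE; case: ifP => c_in; last first.
  by apply/val_inj; rewrite /= (syt_out T_syt) ?c_in.
rewrite cell_occ_word_of_tableau // -cell_atE.
by rewrite prednK ?(syt_gt0 T_syt) // inord_val.
Qed.

End TableauToWord.

Section WordToTableau.

Variable w : seq step.
Hypotheses (w_size : size w = sumn la) (w_ups : count isU w = k.+1)
  (w_lattice : lattice_word w).

Lemma count_lattice_kk1 : count isD w = k.+1 /\ count isF w = j.
Proof.
case: w_lattice => balanced _ _; have := count_UDF w.
by rewrite w_size sumn_kk1 -balanced w_ups; lia.
Qed.

Lemma cell_occ_lt_size i t : in_diagram la i t -> cell_occ w i t < size w.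
Proof.
have [cntD cntF] := count_lattice_kk1; rewrite in_diagram_kk1.
by case: i => [|[|i]] in_it; apply: occ_size; rewrite ?w_ups ?cntD ?cntF; lia.
Qed.

Lemma cell_occ_mono i1 t1 i2 t2 : in_diagram la i1 t1 -> in_diagram la i2 t2 ->
  ((i1 == i2) && (t1 < t2)) || ((t1 == t2) && (i1 < i2)) ->
  cell_occ w i1 t1 < cell_occ w i2 t2.
Proof.
have [cntD cntF] := count_lattice_kk1; case: w_lattice => _ U_before_D F_after_D.
have D0_before_F i : i < j -> occ isD 0 w < occ isF i w.
  move=> lt_ij; have lt_0F : 0 < count isF w by rewrite cntF; lia.
  have [_ D_before_F] := F_after_D lt_0F.
  by apply: leq_trans D_before_F (occ_le _ _); rewrite ?cntF.
have U0_before_D0 : occ isU 0 w < occ isD 0 w by apply: U_before_D; rewrite w_ups.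
rewrite !in_diagram_kk1.
case: i1 => [|[|i1]]; case: i2 => [|[|i2]] //= in1 in2 lt12; try lia.
- by apply: occ_lt; rewrite ?w_ups; lia.
- have -> : t1 = t2 by lia.
  by apply: U_before_D; rewrite w_ups; lia.
- have -> : t1 = 0 by lia.
  by apply: ltn_trans U0_before_D0 (D0_before_F _ _); lia.
- by apply: occ_lt; rewrite ?cntD; lia.
- have -> : t1 = 0 by lia.
  by apply: D0_before_F; lia.
- by apply: occ_lt; rewrite ?cntF; lia.
Qed.

Lemma cell_occ_inj i1 t1 i2 t2 : in_diagram la i1 t1 -> in_diagram la i2 t2 ->
  cell_occ w i1 t1 = cell_occ w i2 t2 -> i1 = i2 /\ t1 = t2.
Proof.
have [cntD cntF] := count_lattice_kk1; rewrite !in_diagram_kk1.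
case: i1 => [|[|i1]] in1; case: i2 => [|[|i2]] in2 /= eq_occ;
  try by exfalso; apply: (occ_disjoint _ _ _ eq_occ) => [[]| |] //;
    rewrite ?w_ups ?cntD ?cntF; lia.
- by split=> //; apply: occ_inj eq_occ; rewrite w_ups; lia.
- by split=> //; apply: occ_inj eq_occ; rewrite cntD; lia.
- have eq_i : i1 = i2 by apply: occ_inj eq_occ; rewrite cntF; lia.
  by split; [rewrite eq_i | lia].
Qed.

Lemma tableau_of_wordE (c : cell la) : in_diagram la c.1 c.2 ->
  val (tableau_of_word w c) = (cell_occ w c.1 c.2).+1.
Proof.
move=> c_in; rewrite ffunE c_in; apply: inordK.
by rewrite ltnS -w_size cell_occ_lt_size.
Qed.

Lemma tableau_of_word_syt : is_syt (tableau_of_word w).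
Proof.
rewrite /is_syt -andbA; apply/and3P; split; apply/forallP => c1.
- case: ifP => c1_in; first by rewrite tableau_of_wordE.
  by rewrite ffunE c1_in.
- apply/forallP => c2; apply/implyP => /andP [/andP [c1_in c2_in] /eqP eqT].
  move: eqT => /(congr1 val); rewrite !tableau_of_wordE // => -[/cell_occ_inj].
  case/(_ c1_in c2_in) => eq1 eq2; apply/eqP.
  by case: c1 c2 {c1_in c2_in} eq1 eq2 => [? ?] [? ?] /= /val_inj -> /val_inj ->.
- apply/forallP => c2; apply/implyP => /andP [/andP [c1_in c2_in] lt_c12].
  by rewrite !tableau_of_wordE // ltnS cell_occ_mono.
Qed.

Lemma tableau_of_wordK : word_of_tableau (tableau_of_word w) = w.
Proof.
have T_syt := tableau_of_word_syt.
have [cntD cntF] := count_lattice_kk1.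
have [cntU' occU] := occ_word_of_tableau_U T_syt.
have [cntD' occD] := occ_word_of_tableau_D T_syt.
have [cntF' occF] := occ_word_of_tableau_col T_syt.
have entry i t : in_diagram la i t ->
    (val (tableau_of_word w (cell_at i t))).-1 = cell_occ w i t.
  move=> in_it; have [lt_i lt_t] := in_diagram_kk1_bounds in_it.
  by rewrite tableau_of_wordE ?cell_at_row ?cell_at_col.
apply: eq_from_occ; first by rewrite size_mkseq w_size.
- split=> [|t]; rewrite cntU' ?w_ups // => lt_t.
  by rewrite occU // entry // in_diagram_kk1 lt_t.
- split=> [|t]; rewrite cntD' ?cntD // => lt_t.
  by rewrite occD // entry // in_diagram_kk1 lt_t.
- split=> [|t]; rewrite cntF' ?cntF // => lt_t.
  by rewrite occF // entry // in_diagram_kk1 /= !ltnS lt_t.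
Qed.

End WordToTableau.

Lemma num_syt_kk1 : num_syt la =
  #|[set t : (sumn la).-tuple step | lattice_from 0 t && (count isU t == k.+1)]|.
Proof.
pose S := [set T | @is_syt la T].
have size_word T : size (word_of_tableau T) == sumn la by rewrite size_mkseq.
pose f T : (sumn la).-tuple step := Tuple (size_word T).
have f_inj : {in S &, injective f}.
  move=> T1 T2; rewrite !inE => T1_syt T2_syt /(congr1 val) /= eq_words.
  by rewrite -(word_of_tableauK T1_syt) eq_words word_of_tableauK.
rewrite /num_syt -(card_in_imset f_inj); apply: eq_card => t; rewrite [in RHS]inE.
apply/imsetP/andP => [[T T_syt ->]|[t_lattice /eqP t_ups]].
  rewrite inE in T_syt; split; first exact/lattice_from0_word/lattice_word_of_tableau.
  by apply/eqP; case: (occ_word_of_tableau_U T_syt).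
have t_size : size t = sumn la by rewrite size_tuple.
have t_word := lattice_word_from0 t_lattice.
exists (tableau_of_word t); first by rewrite inE (tableau_of_word_syt t_size t_ups t_word).
by apply: val_inj; rewrite /= (tableau_of_wordK t_size t_ups t_word).
Qed.

End TableauxKK1.

Lemma riordan_number_lattice n :
  riordan_number n = #|[set t : n.-tuple step | lattice_from 0 t]|.
Proof.
rewrite card_lattice_from nlatticeE -card_riordan_from /riordan_number.
by apply: eq_card => t; rewrite !inE riordanE.
Qed.

Lemma card_tuple_by_ups n (P : pred (seq step)) :
  #|[set t : n.-tuple step | P t]| =
  \sum_(0 <= k < n.+1) #|[set t : n.-tuple step | P t && (count isU t == k)]|.
Proof.
rewrite big_mkord -sum1dep_card.
rewrite (partition_big (fun t : n.-tuple step => inord (count isU t) : 'I_n.+1) xpredT) //.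
apply: eq_bigr => k _; rewrite -sum1dep_card; apply: eq_bigl => t.
rewrite -val_eqE /= inordK // ltnS.
by apply: leq_trans (count_size _ _) _; rewrite size_tuple.
Qed.

Lemma lattice_from0_ups w : lattice_from 0 w -> 0 < size w ->
  0 < count isU w /\ 2 * count isU w <= size w.
Proof.
move=> /lattice_word_from0 [balanced _ F_after_D] w_gt0; have := count_UDF w.
case: (posnP (count isF w)) => [F0|/F_after_D [D_gt0 _]]; lia.
Qed.

Theorem corollary1p3 (n : nat) : 1 <= n ->
  riordan_number n = \sum_(1 <= k < (n./2).+1) num_syt (kk1 k (n - 2 * k)).
Proof.
move=> n_gt0; rewrite riordan_number_lattice card_tuple_by_ups.
pose N k := #|[set t : n.-tuple step | lattice_from 0 t && (count isU t == k)]|.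
have N_out k : (k == 0) || (n./2 < k) -> N k = 0.
  move=> k_out; apply/eq_card0 => t; rewrite inE.
  apply/negP => /andP [/lattice_from0_ups]; rewrite size_tuple => /(_ n_gt0).
  by case=> ups_gt0 ups_le /eqP ups_k; move: k_out ups_gt0 ups_le; rewrite ups_k; lia.
have le_1half : 1 <= (n./2).+1 by [].
have le_halfn : (n./2).+1 <= n.+1 by rewrite ltnS leq_half_double; lia.
under eq_bigr => k _ do rewrite -/(N k).
rewrite (big_cat_nat (leq0n 1) (leq_trans le_1half le_halfn)) /= big_nat1 N_out //.
rewrite add0n (big_cat_nat le_1half le_halfn) /= [X in _ + X]big_nat_cond.
rewrite [X in _ + X]big1.
  rewrite addn0; apply: eq_big_nat => -[|k] // /andP [_ le_kn].
  move: le_kn; rewrite ltnS geq_half_double -addnn => le_kn.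
  by rewrite num_syt_kk1 sumn_kk1 (_ : k.+1 + _ = n) //; lia.
by move=> k /andP [/andP [lt_half _] _]; rewrite N_out // lt_half orbT.
Qed.
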